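(* Let $n\ge 2$ and let $G\subset\mathbb{R}^n$ be a bounded domain with smooth boundary $\Gamma$. Let $p\in\mathbb{R}$ satisfy $n>p\geq \frac{n}{2}>1$ if $n>2$ (respectively $n>p>1$ if $n=2$). Let $V\in L^p(G)$ be scalar-valued. Let $k_1=\|T\|_{[L^p(G),W^1_p(G)]}$ be the operator norm of the Teodorescu transform $T$ from $L^p(G)$ to $W^1_p(G)$, let $C$ be the embedding constant of $W^1_p(G)\hookrightarrow L^{2p}(G)$, and set $k_2=k_1C^2$. Let $\underline{a}_0\in W^1_p(G)$ be vector-valued and define recursively $$\underline{a}_m:=T\big(V+|\underline{a}_{m-1}|^2\big),\quad m=1,2,\ldots$$ Assume $\|V\|_{L^p}\leq \frac{1}{4k_1k_2}$ and put $$W=\sqrt{\frac{1}{4k_2^2}-\frac{k_1}{k_2}\|V\|_{L^p}}.$$ If for some index $m_0$ $$\frac{1}{2k_2}-W\leq \|\underline{a}_{m_0}\|_{W^1_p}\leq \frac{1}{2k_2}+W,$$ then $\|\underline{a}_{m_0+1}\|_{W^1_p}\leq \|\underline{a}_{m_0}\|_{W^1_p}$, and the sequence $\{\underline{a}_m\}_{m\geq m_0}$ is bounded in $W^1_p(G)$ by $\|\underline{a}_{m_0}\|_{W^1_p}$.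
   Context: $\mathcal{C}\ell_{0,n}$ denotes the real Clifford algebra generated by an orthonormal basis $e_1,\dots,e_n$ of $\mathbb{R}^n$ with $e_ie_j+e_je_i=-2\delta_{ij}$; a vector-valued function is $\underline{a}(x)=\sum_{i=1}^n a_i(x)e_i$ with real $a_i$, and $|\underline{a}|^2=\sum_i a_i^2$. Function spaces of $\mathcal{C}\ell_{0,n}$-valued functions $f=\sum_A f_Ae_A$ are defined componentwise, with norm $\|f\|_B=\big(\sum_A\|f_A\|_B^2\big)^{1/2}$. The Teodorescu transform is $Tf(x)=\frac{1}{\omega_n}\int_G\frac{x-y}{|x-y|^n}f(y)\,dy$ (with $x-y$ viewed as a Clifford vector and $\omega_n$ the surface area of the unit sphere in $\mathbb{R}^n$); it is a right inverse of the Dirac operator $D=\sum_{j=1}^n e_j\partial_{x_j}$, and maps scalar-valued functions to vector-valued ones. *)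

From HB Require Import structures.
From mathcomp Require Import all_boot all_order all_algebra.
From mathcomp Require Import all_classical all_reals all_analysis.
From Stdlib Require Import ClassicalEpsilon.
Set Implicit Arguments. Unset Strict Implicit. Unset Printing Implicit Defensive.
Import Order.TTheory GRing.Theory Num.Theory.
Import numFieldNormedType.Exports.
Local Open Scope classical_set_scope.
Local Open Scope ring_scope.

Section Defs.
Context {R : realType} {n : nat}.

(* Points of R^n for measure theory: n.-tuple R (with the product sigma-algebra);
   the same point as a row vector, for topology and differentiation. *)
Definition toRV (x : n.-tuple R) : 'rV[R]_n := \row_i tnth x i.

Definition edist (x y : n.-tuple R) : R :=
  Num.sqrt (\sum_(i < n) (tnth x i - tnth y i) ^+ 2).

Definition is_lebesgue (mu : {measure set (n.-tuple R) -> \bar R}) : Prop :=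
  forall a b : n.-tuple R, (forall i, tnth a i <= tnth b i) ->
    mu [set x | forall i, tnth a i <= tnth x i <= tnth b i] =
      (\prod_(i < n) (tnth b i - tnth a i))%:E.

Definition partial (j : 'I_n) (f : 'rV[R]_n -> R) : 'rV[R]_n -> R :=
  fun x => derive f x (delta_mx 0 j).
Definition ipartial (js : seq 'I_n) (f : 'rV[R]_n -> R) : 'rV[R]_n -> R :=
  foldr partial f js.
Definition smooth (f : 'rV[R]_n -> R) : Prop :=
  forall (js : seq 'I_n) (x : 'rV[R]_n), differentiable (ipartial js f) x.

Definition smooth_boundary (D : set 'rV[R]_n) : Prop :=
  forall x0, closure D x0 -> ~ D x0 ->
    exists (r : R) (j : 'I_n) (s : R) (h : 'rV[R]_n -> R),
      [/\ 0 < r, (s = 1 \/ s = -1), smooth h,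
          (forall x, h x = h (x - (x 0 j) *: delta_mx 0 j)) &
          D `&` ball x0 r = [set x | ball x0 r x /\ s * x 0 j < s * h x]].
Definition bounded_smooth_domain (G : set (n.-tuple R)) : Prop :=
  let D := toRV @` G in
  [/\ open D, connected D, D !=set0, bounded_set D & smooth_boundary D].

Variable mu : {measure set (n.-tuple R) -> \bar R}.
Variable G : set (n.-tuple R).

Definition Lpnorm (q : R) (u : n.-tuple R -> R) : R :=
  fine (Lnorm mu q%:E (EFin \o (u \_ G))).
Definition inLp (q : R) (u : n.-tuple R -> R) : Prop :=
  measurable_fun G u /\ (Lnorm mu q%:E (EFin \o (u \_ G)) < +oo)%E.

Definition test_fun (phi : 'rV[R]_n -> R) : Prop :=
  smooth phi /\ compact (closure [set x | phi x != 0]) /\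
  closure [set x | phi x != 0] `<=` toRV @` G.

Definition weak_deriv (u : n.-tuple R -> R) (j : 'I_n) (g : n.-tuple R -> R) : Prop :=
  forall phi, test_fun phi ->
    Rintegral mu G (fun x => u x * partial j phi (toRV x)) =
    - Rintegral mu G (fun x => g x * phi (toRV x)).

Variable p : R.

Definition inW (u : n.-tuple R -> R) : Prop :=
  inLp p u /\ forall j, exists g, inLp p g /\ weak_deriv u j g.

(* a chosen weak derivative (unique a.e. when it exists) *)
Definition wderiv (u : n.-tuple R -> R) (j : 'I_n) : n.-tuple R -> R :=
  epsilon (inhabits (fun _ => 0)) (fun g => inLp p g /\ weak_deriv u j g).

Definition Wnorm (u : n.-tuple R -> R) : R :=
  powR (powR (Lpnorm p u) p + \sum_(j < n) powR (Lpnorm p (wderiv u j)) p) p^-1.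

(* vector-valued functions a = sum_i a_i e_i : componentwise spaces and norms *)
Definition vinW (a : 'I_n -> n.-tuple R -> R) : Prop := forall i, inW (a i).
Definition vWnorm (a : 'I_n -> n.-tuple R -> R) : R :=
  Num.sqrt (\sum_(i < n) Wnorm (a i) ^+ 2).

(* surface area of the unit sphere S^{n-1}: n * |B^n| *)
Definition omega : R :=
  n%:R * fine (mu [set x | \sum_(i < n) tnth x i ^+ 2 < 1]).

(* Teodorescu transform of a scalar function: vector-valued, component i *)
Definition teodorescu (f : n.-tuple R -> R) : 'I_n -> n.-tuple R -> R :=
  fun i x => omega^-1 *
    Rintegral mu G (fun y => (tnth x i - tnth y i) / edist x y ^+ n * f y).

End Defs.

From HB Require Import structures.
From mathcomp Require Import all_boot all_order all_algebra.
From mathcomp Require Import all_classical all_reals all_analysis.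
From mathcomp Require Import ring lra measurable_realfun.
Import Order.TTheory GRing.Theory Num.Theory.
Import numFieldNormedType.Exports.
Local Open Scope classical_set_scope.
Local Open Scope ring_scope.
Set Implicit Arguments. Unset Strict Implicit. Unset Printing Implicit Defensive.

(** The recursion gives ||a_(m+1)|| <= k1 ||V + |a_m|^2||_p, and by Minkowski's
    inequality and ||a_i^2||_p = ||a_i||_(2p)^2 <= C^2 ||a_i||^2 this is at most
    phi(||a_m||) with phi(y) = k1 ||V||_p + k2 y^2.  The hypothesis on
    X = ||a_(m0)|| says exactly that X lies between the two roots of phi(y) = y,
    i.e. phi(X) <= X; as phi is nondecreasing on [0, oo), every later norm stays
    in [0, X]. *)

Lemma quadratic_le_between_roots (R : rcfType) (k c x : R) :
  0 <= k -> c <= (4 * k)^-1 ->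
  let w := Num.sqrt ((4 * k ^+ 2)^-1 - c / k) in
  (2 * k)^-1 - w <= x <= (2 * k)^-1 + w -> c + k * x ^+ 2 <= x.
Proof.
move=> k_ge0 c_le w /andP[x_lo x_hi].
have [k0|k_neq0] := eqVneq k 0.
  (* With the junk value 0^-1 = 0 the hypotheses force c <= 0 and x = 0. *)
  move: c_le x_lo x_hi; rewrite /w k0 !(mulr0, invr0, expr0n, subrr, sqrtr0) /=.
  lra.
have k_gt0 : 0 < k by rewrite lt_def k_neq0.
set u := (2 * k)^-1 in x_lo x_hi.
have ku : 2 * k * u = 1 by rewrite /u mulfV // mulf_neq0 // pnatr_eq0.
have w_sqr : k * w ^+ 2 = k * u ^+ 2 - c.
  rewrite sqr_sqrtr; first by rewrite /u; field.
  rewrite subr_ge0 ler_pdivrMr // (_ : (4 * k ^+ 2)^-1 * k = (4 * k)^-1) //.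
  by field.
have x_near : k * (x - u) ^+ 2 <= k * w ^+ 2 by rewrite ler_wpM2l //; nra.
have expand : k * (x - u) ^+ 2 = k * x ^+ 2 - 2 * k * u * x + k * u ^+ 2 by ring.
rewrite expand ku mul1r w_sqr in x_near.
lra.
Qed.

Lemma majorant_step_le (R : rcfType) (k1 C L X y t : R) :
  let k2 := k1 * C ^+ 2 in
  L <= (4 * k1 * k2)^-1 ->
  let w := Num.sqrt ((4 * k2 ^+ 2)^-1 - k1 / k2 * L) in
  (2 * k2)^-1 - w <= X <= (2 * k2)^-1 + w ->
  0 <= y <= X -> 0 <= t -> t <= L + C ^+ 2 * y ^+ 2 -> k1 * t <= X.
Proof.
move=> k2 L_le w X_between /andP[y_ge0 y_le] t_ge0 t_le.
have [k1_lt0|k1_ge0] := ltP k1 0.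
  by apply: le_trans (le_trans y_ge0 y_le); rewrite nmulr_rle0.
have k2_ge0 : 0 <= k2 by rewrite mulr_ge0 ?sqr_ge0.
have c_le : k1 * L <= (4 * k2)^-1.
  have [->|k1_neq0] := eqVneq k1 0; first by rewrite mul0r invr_ge0 mulr_ge0.
  apply: le_trans (ler_wpM2l k1_ge0 L_le) _.
  by rewrite [4 * k1]mulrC -mulrA invfM mulVKf.
apply: le_trans (ler_wpM2l k1_ge0 t_le) _.
rewrite mulrDr mulrA -/k2.
apply: le_trans (_ : _ <= k1 * L + k2 * X ^+ 2) _.
  by rewrite lerD2l ler_wpM2l // lerXn2r ?nnegrE // (le_trans y_ge0).
apply: quadratic_le_between_roots k2_ge0 c_le _.
by move: X_between; rewrite /w [k1 / k2 * _]mulrAC.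
Qed.

Lemma toRV_inj (R : realType) n : injective (@toRV R n).
Proof.
move=> x y /(congr1 (fun M : 'rV[R]_n => M 0)) xy; apply: eq_from_tnth => i.
by have := congr1 (fun f => f i) xy; rewrite /= !mxE.
Qed.

Definition rat_box (R : realType) n (k : n.-tuple rat * rat) : set (n.-tuple R) :=
  [set x | forall i, `|ratr (tnth k.1 i) - tnth x i| < ratr k.2].

Lemma measurable_rat_box (R : realType) n k : measurable (@rat_box R n k).
Proof.
have -> : @rat_box R n k = \bigcap_(i in [set: 'I_n])
   (setT `&` (fun x => tnth x i) @^-1` ball (ratr (tnth k.1 i) : R) (ratr k.2)).
  apply/seteqP; split => x /= xk i; last by case: (xk i I).
  by move=> _; split; last exact: xk.
apply: fin_bigcap_measurable => [|i _]; first exact: finite_finset.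
by apply: measurable_tnth => //; rewrite ball_itv; exact: measurable_itv.
Qed.

Lemma rat_box_sub_open (R : realType) n (G : set (n.-tuple R)) x :
  open (toRV @` G) -> G x ->
  exists k : n.-tuple rat * rat, rat_box k x /\ rat_box k `<=` G.
Proof.
move=> oG Gx.
have /nbhs_ballP[e e_gt0 eG] : nbhs (toRV x) (toRV @` G) by apply: oG; exists x.
have [r] := @rat_in_itvoo R 0 (e / 2) ltac:(by rewrite divr_gt0).
rewrite in_itv /= => /andP[r_gt0 r_lt].
have /choice[c xc] i : exists q : rat, `|ratr q - tnth x i| < (ratr r : R).
  have [q] := @rat_in_itvoo R (tnth x i - ratr r) (tnth x i + ratr r)
    ltac:(by rewrite ltrBlDr -addrA ltrDl addr_gt0).
  by rewrite in_itv /= => /andP[q_lo q_hi]; exists q; rewrite ltr_norml; lra.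
exists ([tuple c i | i < n], r); split => [i|y yk] /=; first by rewrite tnth_mktuple.
have : ball (toRV x) e (toRV y).
  split => // i j; rewrite !mxE /ball /=.
  have := yk j; have := xc j; rewrite tnth_mktuple => cx cy.
  apply: le_lt_trans (ler_distD (ratr (c j)) _ _) _.
  by rewrite distrC (splitr e) ltrD // (lt_trans _ r_lt).
by move=> /eG[z Gz /toRV_inj <-].
Qed.

(* G is a countable union of rational boxes. *)
Lemma measurable_open_toRV (R : realType) n (G : set (n.-tuple R)) :
  open (toRV @` G) -> measurable G.
Proof.
move=> oG.
have -> : G = \bigcup_(k in [set k | rat_box k `<=` G]) rat_box k.
  apply/seteqP; split => [x Gx|x [k kG /kG] //].
  by have [k [xk kG]] := rat_box_sub_open oG Gx; exists k.
rewrite bigcup_mkcond; apply: countable_bigcupT_measurable => [|k].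
  exact: countableP.
by case: ifP => _; [exact: measurable_rat_box|exact: measurable0].
Qed.

Section Lnorm_sums.
Context d (T : measurableType d) (R : realType) (mu : {measure set T -> \bar R}).

Lemma Lnorm_sqr (h : T -> R) (p : R) : 0 < p ->
  (Lnorm mu (2 * p)%:E (EFin \o h) < +oo)%E ->
  Lnorm mu p%:E (EFin \o (fun x => h x ^+ 2)) =
  (fine (Lnorm mu (2 * p)%:E (EFin \o h)) ^+ 2)%:E.
Proof.
move=> p_gt0; rewrite unlock /= => h_fin.
under eq_integral do rewrite normrX -powR_mulrn // -powRrM.
set I := (\int[mu]_x (`|h x| `^ (2 * p))%:E)%E.
have I_fin : I \is a fin_num.
  rewrite ge0_fin_numE; last by apply: integral_ge0 => x _; rewrite lee_fin powR_ge0.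
  by apply: lty_poweRy h_fin; rewrite invr_neq0 // mulf_neq0 // gt_eqF.
rewrite -(fineK I_fin) !poweR_EFin /= -powR_mulrn ?powR_ge0 // -powRrM.
by congr (_ `^ _)%:E; field; rewrite gt_eqF.
Qed.

Lemma Lnorm_sum_le (I : Type) (s : seq I) (F : I -> T -> R) (p : R) : 1 <= p ->
  (forall i, measurable_fun setT (F i)) ->
  (Lnorm mu p%:E (EFin \o (fun x => (\sum_(i <- s) F i x)%R)) <=
    \sum_(i <- s) Lnorm mu p%:E (EFin \o F i))%E.
Proof.
move=> p_ge1 mF; elim: s => [|i s IH].
  under eq_fun do rewrite big_nil.
  by rewrite Lnorm0 ?big_nil // eqe gt_eqF // (lt_le_trans _ p_ge1).
under eq_fun do rewrite big_cons.
rewrite big_cons; apply: le_trans (minkowski_EFin _ _ _ p_ge1) _ => //.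
  exact: measurable_sum.
exact: leeD2l.
Qed.

End Lnorm_sums.

Section Lp_on_domain.
Variables (R : realType) (n : nat) (mu : {measure set (n.-tuple R) -> \bar R}).
Variables (G : set (n.-tuple R)) (p : R).

Lemma Lpnorm_ge0 q u : 0 <= Lpnorm mu G q u.
Proof. exact/fine_ge0/Lnorm_ge0. Qed.

Lemma sum_Lpnorm_sqr_le_vWnorm (C : R) (a : 'I_n -> n.-tuple R -> R) :
  (forall u, inW mu G p u -> Lpnorm mu G (2 * p) u <= C * Wnorm mu G p u) ->
  vinW mu G p a ->
  \sum_(i < n) Lpnorm mu G (2 * p) (a i) ^+ 2 <= C ^+ 2 * vWnorm mu G p a ^+ 2.
Proof.
move=> emb aW; rewrite sqr_sqrtr ?sumr_ge0 // => [|i _]; last exact: sqr_ge0.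
rewrite mulr_sumr; apply: ler_sum => i _; rewrite -exprMn.
have := emb _ (aW i) => le_i.
by rewrite lerXn2r ?nnegrE ?Lpnorm_ge0 // (le_trans _ le_i) ?Lpnorm_ge0.
Qed.

Section square_sum.
Hypotheses (mG : measurable G) (p_ge1 : 1 <= p).
Variables (V : n.-tuple R -> R) (b : 'I_n -> n.-tuple R -> R).
Hypotheses (VLp : inLp mu G p V) (bL2p : forall i, inLp mu G (2 * p) (b i)).

Lemma Lnorm_add_sum_sqr_le :
  (Lnorm mu p%:E (EFin \o ((fun x => V x + \sum_(i < n) b i x ^+ 2)%R \_ G)) <=
    (Lpnorm mu G p V + \sum_(i < n) Lpnorm mu G (2 * p) (b i) ^+ 2)%:E)%E.
Proof.
have p_gt0 : 0 < p by apply: lt_le_trans p_ge1.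
have mb i : measurable_fun setT (b i \_ G).
  by apply/(measurable_restrictT _ mG); case: (bL2p i).
have -> : (fun x => V x + \sum_(i < n) b i x ^+ 2) \_ G =
    (V \_ G \+ (fun x => \sum_(i < n) (b i \_ G) x ^+ 2))%R.
  apply/funext => x /=; rewrite /patch; case: ifP => // _.
  by rewrite add0r big1 // => i _; rewrite expr0n.
apply: le_trans (minkowski_EFin _ _ _ p_ge1) _.
- by apply/(measurable_restrictT _ mG); case: VLp.
- by apply: measurable_sum => i; exact: measurable_funX.
rewrite EFinD; apply: leeD.
  by rewrite /Lpnorm fineK // ge0_fin_numE ?Lnorm_ge0 //; case: VLp.
rewrite -sumEFin.
apply: le_trans (Lnorm_sum_le mu _ p_ge1 _) _.
  by move=> i; exact: measurable_funX.
by apply: lee_sum => i _; rewrite Lnorm_sqr //; case: (bL2p i).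
Qed.

Lemma inLp_add_sum_sqr : inLp mu G p (fun x => V x + \sum_(i < n) b i x ^+ 2).
Proof.
split; last by apply: le_lt_trans Lnorm_add_sum_sqr_le _; rewrite ltry.
apply: measurable_funD; first by case: VLp.
by apply: measurable_sum => i; apply: measurable_funX; case: (bL2p i).
Qed.

Lemma Lpnorm_add_sum_sqr_le :
  Lpnorm mu G p (fun x => V x + \sum_(i < n) b i x ^+ 2) <=
    Lpnorm mu G p V + \sum_(i < n) Lpnorm mu G (2 * p) (b i) ^+ 2.
Proof.
rewrite /Lpnorm -lee_fin fineK; first exact: Lnorm_add_sum_sqr_le.
by rewrite ge0_fin_numE ?Lnorm_ge0 //; case: inLp_add_sum_sqr.
Qed.

End square_sum.
End Lp_on_domain.

Theorem lemma1 (R : realType) (n : nat)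
  (mu : {measure set (n.-tuple R) -> \bar R}) (G : set (n.-tuple R)) (p : R)
  (V : n.-tuple R -> R) (a0 : 'I_n -> n.-tuple R -> R)
  (a : nat -> 'I_n -> n.-tuple R -> R) (k1 C : R) :
  (2 <= n)%N ->
  is_lebesgue mu ->
  bounded_smooth_domain G ->
  ((2 < n)%N -> p < (n%:R : R) /\ (n%:R : R) / 2 <= p /\ 1 < (n%:R : R) / 2) ->
  (n = 2%N -> p < (n%:R : R) /\ 1 < p) ->
  inLp mu G p V ->
  (* k1 is the operator norm of T : L^p(G) -> W^1_p(G) *)
  (forall f, inLp mu G p f -> vinW mu G p (teodorescu mu G f)) ->
  (forall f, inLp mu G p f ->
     vWnorm mu G p (teodorescu mu G f) <= k1 * Lpnorm mu G p f) ->
  (forall k, (forall f, inLp mu G p f ->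
     vWnorm mu G p (teodorescu mu G f) <= k * Lpnorm mu G p f) -> k1 <= k) ->
  (* C is the embedding constant of W^1_p(G) into L^{2p}(G) *)
  (forall u, inW mu G p u -> inLp mu G (2 * p) u) ->
  (forall u, inW mu G p u -> Lpnorm mu G (2 * p) u <= C * Wnorm mu G p u) ->
  (forall c, (forall u, inW mu G p u ->
     Lpnorm mu G (2 * p) u <= c * Wnorm mu G p u) -> C <= c) ->
  vinW mu G p a0 ->
  a 0%N = a0 ->
  (forall m, a m.+1 =
     teodorescu mu G (fun x => V x + \sum_(i < n) a m i x ^+ 2)) ->
  let k2 := k1 * C ^+ 2 in
  Lpnorm mu G p V <= (4 * k1 * k2)^-1 ->
  let W := Num.sqrt ((4 * k2 ^+ 2)^-1 - k1 / k2 * Lpnorm mu G p V) in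
  forall m0,
    (2 * k2)^-1 - W <= vWnorm mu G p (a m0) <= (2 * k2)^-1 + W ->
    vWnorm mu G p (a m0.+1) <= vWnorm mu G p (a m0) /\
    (forall m, (m0 <= m)%N ->
       vinW mu G p (a m) /\ vWnorm mu G p (a m) <= vWnorm mu G p (a m0)).
Proof.
move=> n_ge2 _ [G_open _ _ _ _] p_gt p_2 VLp TW T_le _ embLp emb_le _ a0W a_0 a_S
  k2 V_le W m0 X_between.
have mG := measurable_open_toRV G_open.
have p_ge1 : 1 <= p.
  move: n_ge2; rewrite leq_eqVlt => /orP[/eqP n_eq2|n_gt2].
    by case: (p_2 (esym n_eq2)) => _ /ltW.
  by case: (p_gt n_gt2) => _ [half_le /ltW]; move/le_trans; apply.
pose F m x := V x + \sum_(i < n) a m i x ^+ 2.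
have FLp m : vinW mu G p (a m) -> inLp mu G p (F m).
  by move=> amW; apply: inLp_add_sum_sqr => // i; apply/embLp/amW.
have aW m : vinW mu G p (a m).
  by elim: m => [|m IH]; [rewrite a_0 | rewrite a_S; exact/TW/FLp].
have F_le m : Lpnorm mu G p (F m) <=
    Lpnorm mu G p V + C ^+ 2 * vWnorm mu G p (a m) ^+ 2.
  apply: le_trans (Lpnorm_add_sum_sqr_le mG p_ge1 VLp _) _.
    by move=> i; apply/embLp/aW.
  by rewrite lerD2l sum_Lpnorm_sqr_le_vWnorm.
set X := vWnorm mu G p (a m0) in X_between *.
have step m : vWnorm mu G p (a m) <= X -> vWnorm mu G p (a m.+1) <= X.
  move=> am_le; rewrite a_S; apply: le_trans (T_le _ (FLp m (aW m))) _.
  apply: (majorant_step_le V_le X_between _ (Lpnorm_ge0 _ _ _ _) (F_le m)).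
  by rewrite am_le sqrtr_ge0.
split=> [|m m0_le]; first exact: step m0 (lexx X).
split; first exact: aW.
rewrite -(subnKC m0_le); elim: (m - m0)%N => [|k IH].
  by rewrite addn0; exact: lexx.
by rewrite addnS; exact: step.
Qed.
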